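(* Let $S$ be a periodic semigroup. Then $S$ is DSC if and only if $S$ is a group.
   Context: $S$ is periodic if for every $s\in S$ there are distinct $m,n\in\mathbb{N}$ with $s^m=s^n$. A diagonal subsemigroup of $S\times S$ is a subsemigroup containing $\{(s,s)\colon s\in S\}$; a congruence is a symmetric and transitive diagonal subsemigroup; $S$ is DSC if every diagonal subsemigroup of $S\times S$ is a congruence on $S$. *)

(* spow mul s n = s^(n+1)  (positive powers only, as in a semigroup) *)
Fixpoint spow {S : Type} (mul : S -> S -> S) (s : S) (n : nat) : S :=
  match n with
  | O => s
  | Datatypes.S k => mul (spow mul s k) s
  end.

(* S is periodic: for every s there are distinct positive m, n with s^m = s^n.
   Here m = i+1, n = j+1. *)
Definition periodic {S : Type} (mul : S -> S -> S) : Prop :=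
  forall s : S, exists i j : nat, i <> j /\ spow mul s i = spow mul s j.

Definition subsemigroup2 {S : Type} (mul : S -> S -> S) (rho : S -> S -> Prop) : Prop :=
  forall a b c d : S, rho a b -> rho c d -> rho (mul a c) (mul b d).

Definition diagonal_subsemigroup {S : Type} (mul : S -> S -> S) (rho : S -> S -> Prop) : Prop :=
  subsemigroup2 mul rho /\ (forall s : S, rho s s).

Definition congruence {S : Type} (mul : S -> S -> S) (rho : S -> S -> Prop) : Prop :=
  diagonal_subsemigroup mul rho /\
  (forall a b, rho a b -> rho b a) /\
  (forall a b c, rho a b -> rho b c -> rho a c).

Definition DSC {S : Type} (mul : S -> S -> S) : Prop :=
  forall rho : S -> S -> Prop, diagonal_subsemigroup mul rho -> congruence mul rho.

Definition is_group {S : Type} (mul : S -> S -> S) : Prop :=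
  exists e : S,
    (forall x : S, mul e x = x /\ mul x e = x) /\
    (forall x : S, exists y : S, mul x y = e /\ mul y x = e).

(* Forward direction: a DSC semigroup is simple, since the diagonal subsemigroup
   Δ ∪ (S¹aS¹ × S) is symmetric.  A periodic simple semigroup satisfies
   x ∈ xzS¹ for all x, z (x = p x u gives x = x f for an idempotent power f of u),
   so ≤_R is a diagonal subsemigroup, and symmetry of (aS¹ × bS¹) ∪ ≤_R makes S
   right simple.  Dually S is left simple, and a left and right simple semigroup
   with an idempotent is a group.
   Backward direction: in a periodic group every inverse is a positive power, so
   a diagonal subsemigroup is closed under inverses, and symmetry and
   transitivity follow from (b, a) = (b, b)(a⁻¹, b⁻¹)(a, a) and
   (a, c) = (a, b)(b⁻¹, b⁻¹)(b, c). *)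
From Stdlib Require Import Arith Lia.

Section Semigroup.

Variables (T : Type) (mul : T -> T -> T).
Hypothesis mul_assoc : forall x y z : T, mul x (mul y z) = mul (mul x y) z.

Lemma spow_Sl x n : spow mul x (S n) = mul x (spow mul x n).
Proof.
  induction n as [|n IH]; [reflexivity|].
  change (mul (spow mul x (S n)) x = mul x (mul (spow mul x n) x)).
  rewrite IH, mul_assoc. reflexivity.
Qed.

Lemma spow_add x m n : spow mul x (m + S n) = mul (spow mul x m) (spow mul x n).
Proof.
  induction n as [|n IH].
  - rewrite Nat.add_1_r. reflexivity.
  - rewrite Nat.add_succ_r. cbn [spow]. rewrite IH, mul_assoc. reflexivity.
Qed.

Lemma spow_shift x i d :
  spow mul x i = spow mul x (i + d) -> forall n, i <= n -> spow mul x n = spow mul x (n + d).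
Proof.
  intros Hid n Hin.
  destruct (Nat.eq_dec n i) as [->|Hne]; [exact Hid|].
  replace n with (i + S (n - i - 1)) by lia.
  replace (i + S (n - i - 1) + d) with (i + d + S (n - i - 1)) by lia.
  rewrite !spow_add, Hid. reflexivity.
Qed.

Lemma spow_shift_mul x i d :
  spow mul x i = spow mul x (i + d) ->
  forall t n, i <= n -> spow mul x n = spow mul x (n + t * d).
Proof.
  intros Hid t n Hin. induction t as [|t IH].
  - rewrite Nat.add_0_r. reflexivity.
  - replace (n + S t * d) with (n + t * d + d) by lia.
    rewrite <- (spow_shift x i d Hid); [exact IH | lia].
Qed.

Lemma periodic_idempotent_power (hper : periodic mul) x :
  exists K, mul (spow mul x K) (spow mul x K) = spow mul x K.
Proof.
  assert (Hlt : forall i j, i < j -> spow mul x i = spow mul x j ->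
            exists K, mul (spow mul x K) (spow mul x K) = spow mul x K).
  { intros i j Hij Heq.
    set (d := j - i).
    (* x^(K+1) with K + 1 = (i+1)d lies in the cycle and is a multiple of the period *)
    exists ((i + 1) * d - 1).
    rewrite <- spow_add.
    replace ((i + 1) * d - 1 + S ((i + 1) * d - 1))
      with ((i + 1) * d - 1 + (i + 1) * d) by (unfold d; nia).
    symmetry. apply (spow_shift_mul x i d); [|unfold d; nia].
    replace (i + d) with j by (unfold d; lia). exact Heq. }
  destruct (hper x) as [i [j [Hne Heq]]].
  destruct (Nat.lt_total i j) as [H|[H|H]]; [eauto|contradiction|eauto].
Qed.

Lemma spow_idempotent_factor x K :
  mul (spow mul x K) (spow mul x K) = spow mul x K ->
  spow mul x K = mul x (spow mul x (K + K)).
Proof.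
  intros HK. rewrite <- spow_Sl, <- Nat.add_succ_r, spow_add. exact (eq_sym HK).
Qed.

Lemma subsemigroup2_spow rho :
  subsemigroup2 mul rho -> forall a b n, rho a b -> rho (spow mul a n) (spow mul b n).
Proof. intros Hs a b n Hab. induction n; cbn [spow]; auto. Qed.

(* [None] plays the role of the identity adjoined in the monoid S¹:
   [lmul1 p x] and [rmul1 x q] are the products p x and x q with p, q ∈ S¹. *)
Definition lmul1 (p : option T) (x : T) : T :=
  match p with None => x | Some p => mul p x end.
Definition rmul1 (x : T) (q : option T) : T :=
  match q with None => x | Some q => mul x q end.

Lemma rmul1_mul x y q : rmul1 (mul x y) q = mul x (rmul1 y q).
Proof. destruct q; simpl; rewrite ?mul_assoc; reflexivity. Qed.

Lemma lmul1_mul p x y : lmul1 p (mul x y) = mul (lmul1 p x) y.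
Proof. destruct p; simpl; rewrite ?mul_assoc; reflexivity. Qed.

Lemma mul_rmul1 x q z : mul (rmul1 x q) z = rmul1 x (Some (lmul1 q z)).
Proof. destruct q; simpl; rewrite ?mul_assoc; reflexivity. Qed.

Lemma mul_lmul1 y p x : mul y (lmul1 p x) = lmul1 (Some (rmul1 y p)) x.
Proof. destruct p; simpl; rewrite ?mul_assoc; reflexivity. Qed.

Lemma lmul1_lmul1 p q x : exists r, lmul1 p (lmul1 q x) = lmul1 r x.
Proof.
  destruct p as [p|]; [exists (Some (rmul1 p q)); apply mul_lmul1 | exists q; reflexivity].
Qed.

(* Green's preorders: [R_le x y] is x ∈ yS¹, [L_le x y] is x ∈ S¹y, [J_le x y] is x ∈ S¹yS¹. *)
Definition R_le (x y : T) : Prop := exists s, x = rmul1 y s.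
Definition L_le (x y : T) : Prop := exists s, x = lmul1 s y.
Definition J_le (x y : T) : Prop := exists p q, x = lmul1 p (rmul1 y q).

Lemma R_le_refl x : R_le x x.
Proof. exists None. reflexivity. Qed.

Lemma R_le_mulr x z : R_le (mul x z) x.
Proof. exists (Some z). reflexivity. Qed.

Lemma R_le_trans x y z : R_le x y -> R_le y z -> R_le x z.
Proof.
  intros [s ->] [t ->]. destruct s as [s|].
  - exists (Some (lmul1 t s)). apply mul_rmul1.
  - exists t. reflexivity.
Qed.

Lemma J_le_mull x y a : J_le x a -> J_le (mul y x) a.
Proof. intros [p [q ->]]. exists (Some (rmul1 y p)), q. apply mul_lmul1. Qed.

Lemma J_le_mulr x z a : J_le x a -> J_le (mul x z) a.
Proof.
  intros [p [q ->]]. exists p, (Some (lmul1 q z)).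
  rewrite <- mul_rmul1, lmul1_mul. reflexivity.
Qed.

Lemma DSC_simple : DSC mul -> forall a b, J_le b a.
Proof.
  intros hd a b.
  set (rho := fun x y => x = y \/ J_le x a).
  assert (Hrho : diagonal_subsemigroup mul rho).
  { split; [|intros s; left; reflexivity].
    intros x y z w [<- | Hx] [<- | Hz].
    - left. reflexivity.
    - right. apply J_le_mull, Hz.
    - right. apply J_le_mulr, Hx.
    - right. apply J_le_mulr, Hx. }
  destruct (hd rho Hrho) as [_ [Hsym _]].
  assert (Hab : rho a b) by (right; exists None, None; reflexivity).
  destruct (Hsym a b Hab) as [-> | Hb]; [exists None, None; reflexivity | exact Hb].
Qed.

Lemma lmul1_iterate x p u :
  x = lmul1 p (mul x u) -> forall n, exists r, x = lmul1 r (mul x (spow mul u n)).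
Proof.
  intros Hx n. induction n as [|n [r Hr]]; [exists p; exact Hx|].
  destruct (lmul1_lmul1 r p (mul x (spow mul u (S n)))) as [r' Hr'].
  exists r'. rewrite <- Hr', spow_Sl, mul_assoc, lmul1_mul, <- Hx. exact Hr.
Qed.

Lemma periodic_simple_R_le_mul (hper : periodic mul) (hsimple : forall a b, J_le b a) x z :
  R_le x (mul x z).
Proof.
  destruct (hsimple (mul x z) x) as [p [q Hx]].
  set (u := rmul1 z q).
  rewrite rmul1_mul in Hx. fold u in Hx.
  destruct (periodic_idempotent_power hper u) as [K HK].
  set (f := spow mul u K) in HK.
  destruct (lmul1_iterate x p u Hx K) as [r Hr]. fold f in Hr.
  assert (Hxf : x = mul x f).
  { rewrite Hr at 2. rewrite <- lmul1_mul, <- mul_assoc, HK. exact Hr. }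
  exists (Some (lmul1 q (spow mul u (K + K)))).
  rewrite <- mul_rmul1, rmul1_mul. fold u.
  rewrite <- mul_assoc, <- spow_idempotent_factor; assumption.
Qed.

Lemma DSC_periodic_right_simple (hper : periodic mul) (hd : DSC mul) a b : R_le b a.
Proof.
  set (rho := fun x y => (R_le x a /\ R_le y b) \/ R_le x y).
  assert (Hrho : diagonal_subsemigroup mul rho).
  { split; [|intros s; right; apply R_le_refl].
    intros x y z w [[Hxa Hyb] | Hxy] _.
    - left. split; eapply R_le_trans; eauto using R_le_mulr.
    - right. apply (R_le_trans _ x); [apply R_le_mulr|].
      apply (R_le_trans _ y); [exact Hxy|].
      apply periodic_simple_R_le_mul; [exact hper | exact (DSC_simple hd)]. }
  destruct (hd rho Hrho) as [_ [Hsym _]].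
  assert (Hab : rho a b) by (left; split; apply R_le_refl).
  destruct (Hsym a b Hab) as [[Hba _] | Hba]; exact Hba.
Qed.

Lemma right_left_simple_group e :
  mul e e = e -> (forall a b, R_le b a) -> (forall a b, L_le b a) -> is_group mul.
Proof.
  intros He HR HL.
  assert (Hid : forall x, mul e x = x /\ mul x e = x).
  { intros x. split.
    - destruct (HR e x) as [s ->]. rewrite <- rmul1_mul, He. reflexivity.
    - destruct (HL e x) as [s ->]. rewrite <- lmul1_mul, He. reflexivity. }
  exists e. split; [exact Hid|]. intros x.
  destruct (HR x e) as [[s|] Hs]; [|simpl in Hs; subst x; exists e; auto].
  destruct (HL x e) as [[t|] Ht]; [|simpl in Ht; subst x; exists e; auto].
  simpl in Hs, Ht. exists s. split; [auto|].
  assert (Hts : t = s).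
  { rewrite <- (proj2 (Hid t)), Hs, mul_assoc, <- Ht. apply Hid. }
  rewrite <- Hts. auto.
Qed.

Lemma spow_flip x n : spow (fun a b => mul b a) x n = spow mul x n.
Proof.
  induction n as [|n IH]; [reflexivity|].
  cbn [spow]. rewrite IH, <- spow_Sl. reflexivity.
Qed.

Lemma periodic_flip : periodic mul -> periodic (fun a b => mul b a).
Proof.
  intros hper s. destruct (hper s) as [i [j [Hne Heq]]].
  exists i, j. rewrite !spow_flip. auto.
Qed.

Lemma DSC_flip : DSC mul -> DSC (fun a b => mul b a).
Proof.
  intros hd rho [Hs Hr].
  assert (Hrho : diagonal_subsemigroup mul rho).
  { split; [|exact Hr]. intros a b c d H1 H2. exact (Hs c d a b H2 H1). }
  destruct (hd rho Hrho) as [_ Hcong]. split; [split|]; assumption.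
Qed.

End Semigroup.

Section PeriodicGroup.

Variables (T : Type) (mul : T -> T -> T) (e : T).
Hypothesis mul_assoc : forall x y z : T, mul x (mul y z) = mul (mul x y) z.
Hypothesis mul_e : forall x, mul e x = x /\ mul x e = x.
Hypothesis mul_inv : forall x, exists y, mul x y = e /\ mul y x = e.
Hypothesis hper : periodic mul.

Lemma mul_cancel_l a b c : mul a b = mul a c -> b = c.
Proof.
  intros H. destruct (mul_inv a) as [y [_ Hya]].
  rewrite <- (proj1 (mul_e b)), <- (proj1 (mul_e c)), <- Hya, <- !mul_assoc, H.
  reflexivity.
Qed.

Lemma inverse_unique a p q : mul p a = e -> mul a q = e -> p = q.
Proof.
  intros Hp Hq. rewrite <- (proj2 (mul_e p)), <- Hq, mul_assoc, Hp. apply mul_e.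
Qed.

Lemma periodic_spow_e x : exists n, spow mul x n = e.
Proof.
  assert (Hlt : forall i j, i < j -> spow mul x i = spow mul x j ->
            exists n, spow mul x n = e).
  { intros i j Hij Heq. exists (j - i - 1).
    replace j with (i + S (j - i - 1)) in Heq by lia.
    rewrite spow_add in Heq by exact mul_assoc.
    apply (mul_cancel_l (spow mul x i)). rewrite <- Heq. symmetry. apply mul_e. }
  destruct (hper x) as [i [j [Hne Heq]]].
  destruct (Nat.lt_total i j) as [H|[H|H]]; [eauto|contradiction|eauto].
Qed.

Lemma spow_e_mul x n : spow mul x n = e -> forall m, spow mul x (m * S n + n) = e.
Proof.
  intros Hn m. induction m as [|m IH]; [exact Hn|].
  replace (S m * S n + n) with (m * S n + n + S n) by lia.
  rewrite spow_add, IH, Hn by exact mul_assoc. apply mul_e.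
Qed.

Lemma spow_e_common a b : exists k, spow mul a k = e /\ spow mul b k = e.
Proof.
  destruct (periodic_spow_e a) as [na Ha]. destruct (periodic_spow_e b) as [nb Hb].
  exists (nb * S na + na). split; [exact (spow_e_mul a na Ha nb)|].
  replace (nb * S na + na) with (na * S nb + nb) by lia. exact (spow_e_mul b nb Hb na).
Qed.

Lemma spow_e_double x k : spow mul x k = e -> spow mul x (S (k + k)) = e.
Proof.
  intros Hk. rewrite <- Nat.add_succ_r, spow_add, Hk by exact mul_assoc. apply mul_e.
Qed.

(* a⁻¹ is a positive power of a, taken with a common exponent for a and b *)
Lemma diagonal_subsemigroup_inv rho a b a' b' :
  diagonal_subsemigroup mul rho -> rho a b ->
  mul a a' = e -> mul b' b = e -> rho a' b'.
Proof.
  intros [Hs _] Hab Ha Hb.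
  destruct (spow_e_common a b) as [k [Hak Hbk]].
  replace a' with (spow mul a (k + k)).
  - replace b' with (spow mul b (k + k)).
    + exact (subsemigroup2_spow T mul rho Hs a b (k + k) Hab).
    + symmetry. apply (inverse_unique b); [exact Hb|].
      rewrite <- spow_Sl by exact mul_assoc. exact (spow_e_double b k Hbk).
  - apply (inverse_unique a); [exact (spow_e_double a k Hak) | exact Ha].
Qed.

Lemma periodic_group_DSC : DSC mul.
Proof.
  intros rho Hrho. pose proof Hrho as [Hs Hr].
  split; [exact Hrho|]. split.
  - intros a b Hab.
    destruct (mul_inv a) as [a' [Haa' Ha'a]]. destruct (mul_inv b) as [b' [Hbb' Hb'b]].
    pose proof (diagonal_subsemigroup_inv rho a b a' b' Hrho Hab Haa' Hb'b) as Hinv.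
    pose proof (Hs _ _ _ _ (Hs _ _ _ _ (Hr b) Hinv) (Hr a)) as R.
    rewrite <- (mul_assoc b a' a), Ha'a, Hbb', (proj2 (mul_e b)), (proj1 (mul_e a)) in R.
    exact R.
  - intros a b c Hab Hbc.
    destruct (mul_inv b) as [b' [Hbb' Hb'b]].
    pose proof (Hs _ _ _ _ (Hs _ _ _ _ Hab (Hr b')) Hbc) as R.
    rewrite <- (mul_assoc a b' b), Hb'b, Hbb', (proj2 (mul_e a)), (proj1 (mul_e c)) in R.
    exact R.
Qed.

End PeriodicGroup.

Theorem mainTheorem6 (S : Type) (mul : S -> S -> S)
  (mul_assoc : forall x y z : S, mul x (mul y z) = mul (mul x y) z)
  (S_nonempty : inhabited S)
  (hper : periodic mul) :
  DSC mul <-> is_group mul.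
Proof.
  split.
  - intros hd. destruct S_nonempty as [x0].
    destruct (periodic_idempotent_power S mul mul_assoc hper x0) as [K HK].
    apply (right_left_simple_group S mul mul_assoc _ HK).
    + exact (DSC_periodic_right_simple S mul mul_assoc hper hd).
    (* ≤_R of the opposite semigroup is ≤_L by conversion *)
    + exact (DSC_periodic_right_simple S (fun a b => mul b a)
               (fun x y z => eq_sym (mul_assoc z y x))
               (periodic_flip S mul mul_assoc hper) (DSC_flip S mul hd)).
  - intros [e [He Hinv]]. exact (periodic_group_DSC S mul e mul_assoc He Hinv hper).
Qed.
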